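(* Let $m, n$ be positive integers with $m \mid n$, let $N < 2^n$ be a positive integer, and let $x < 2^m$ be an odd positive integer. Let $x_{\mathrm{minv}}$ be the inverse of $x$ modulo $2^m$. Define $z_0 = 0$ and, for $j = 0, 1, \ldots, \frac{n-2m}{m}$: $N_j = \lfloor N/2^{jm}\rfloor \bmod 2^m$; $\mathsf{ctrl}_j = \big[x_{\mathrm{minv}}\,(N_j - z_j)\big] \bmod 2^m \in [0, 2^m-1]$; $z'_j = z_j + \mathsf{ctrl}_j \cdot x$; and $z_{j+1} = \lfloor z'_j / 2^m\rfloor$. For $j = 0, 1, \ldots, \frac{n-m}{m}$ let $y_j = z_j\cdot 2^{jm} + (N \bmod 2^{jm})$. Then for all $j = 0, 1, \ldots, \frac{n-m}{m}$: (1) $y_j \equiv N \pmod{2^{jm}}$; (2) $0 \le y_j < 2^{jm}\cdot x$; (3) $y_j$ is divisible by $x$. *)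

From mathcomp Require Import all_boot all_algebra.
Set Implicit Arguments. Unset Strict Implicit. Unset Printing Implicit Defensive.
Import GRing.Theory Num.Theory.
Local Open Scope ring_scope.

Definition Nblk (m N j : nat) : nat := ((N %/ 2 ^ (j * m)) %% 2 ^ m)%N.

Definition ctrl (m N x xminv j : nat) (zj : int) : int :=
  ((xminv%:Z * ((Nblk m N j)%:Z - zj)) %% (2 ^ m)%N%:Z)%Z.

Fixpoint zseq (m N x xminv j : nat) : int :=
  match j with
  | 0 => 0
  | j'.+1 =>
      let zj := zseq m N x xminv j' in
      ((zj + ctrl m N x xminv j' zj * x%:Z) %/ (2 ^ m)%N%:Z)%Z
  end.

Definition yseq (m N x xminv j : nat) : int :=
  zseq m N x xminv j * (2 ^ (j * m))%N%:Z + (N %% 2 ^ (j * m))%N%:Z.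

(* Every step adds a multiple [ctrl_j * x * 2^(jm)] of [x] to [y_j], and [ctrl_j] is chosen
   (Montgomery's trick, using [x^-1 mod 2^m]) so that [z_j + ctrl_j * x] has the next
   [m]-bit digit [N_j] of [N] as its low digit.  Hence [y_(j+1) = y_j + ctrl_j * x * 2^(jm)]:
   divisibility by [x] is preserved, and since [ctrl_j < 2^m] the bound
   [y_j < 2^(jm) * x] propagates to [j + 1]. *)
From mathcomp Require Import all_boot all_algebra.
From mathcomp Require Import zify ring.
Set Implicit Arguments. Unset Strict Implicit. Unset Printing Implicit Defensive.
Import GRing.Theory Num.Theory.
Local Open Scope ring_scope.

Lemma modnM_digits (N a b : nat) : (N %% (b * a) = (N %/ a) %% b * a + N %% a)%N.
Proof.
by rewrite {1}(divn_eq (N %% (b * a)) a) -modn_divl modn_dvdm // dvdn_mull.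
Qed.

Lemma montgomery_digit (M b z x xinv : int) : (x * xinv = 1 %[mod M])%Z ->
  (z + ((xinv * (b - z)) %% M)%Z * x = b %[mod M])%Z.
Proof.
move=> x_xinv.
rewrite -modzDmr modzMml modzDmr.
have -> : z + xinv * (b - z) * x = z + (b - z) * (x * xinv) by ring.
by rewrite -modzDmr -modzMmr x_xinv modzMmr modzDmr mulr1 addrC subrK.
Qed.

Lemma ltr_add_digit (y c Q M : int) :
  0 <= y < Q -> 0 <= c < M -> 0 <= y + c * Q < M * Q.
Proof. by move=> /andP[? ?] /andP[? ?]; apply/andP; split; nia. Qed.

Lemma pow2z_gt0 k : 0 < (2 ^ k)%N%:Z.
Proof. by rewrite ltz_nat expn_gt0. Qed.

Section MontgomeryReduction.

Variables m N x xminv : nat.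

Local Notation M := (2 ^ m)%N%:Z.
Local Notation P j := (2 ^ (j * m))%N%:Z.
Local Notation z j := (zseq m N x xminv j).
Local Notation c j := (ctrl m N x xminv j (z j)).
Local Notation y j := (yseq m N x xminv j).

Lemma ctrl_bounds j : 0 <= c j < M.
Proof.
by rewrite /ctrl modz_ge0 ?ltz_pmod ?pow2z_gt0 // lt0r_neq0 ?pow2z_gt0.
Qed.

Lemma yseq_modN j : (y j = N%:Z %[mod P j])%Z.
Proof. by rewrite /yseq modzMDl !modz_nat modn_mod. Qed.

Hypothesis x_xminv : (x * xminv = 1 %[mod 2 ^ m])%N.

Lemma zseq_step j : z j.+1 * M = z j + c j * x%:Z - (Nblk m N j)%:Z.
Proof.
have low_digit : ((z j + c j * x%:Z) %% M)%Z = (Nblk m N j)%:Z.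
  rewrite montgomery_digit; last by rewrite -PoszM !modz_nat x_xminv.
  by rewrite modz_small // ltz_nat ltn_mod expn_gt0.
by rewrite /= {2}(divz_eq (z j + c j * x%:Z) M) low_digit addrK.
Qed.

Lemma yseq_step j : y j.+1 = y j + c j * x%:Z * P j.
Proof.
rewrite /yseq mulSn expnD modnM_digits !PoszD !PoszM -/(Nblk m N j).
by rewrite mulrA zseq_step; ring.
Qed.

Lemma dvdz_yseq j : (x%:Z %| y j)%Z.
Proof.
elim: j => [|j IHj]; first by rewrite /yseq /= mul0r add0r mul0n modn1 dvdz0.
by rewrite yseq_step rpredD // -mulrA mulrCA dvdz_mulr.
Qed.

Lemma yseq_bounds j : (0 < x)%N -> 0 <= y j < (2 ^ (j * m) * x)%N%:Z.
Proof.
move=> x_gt0; elim: j => [|j IHj].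
  by rewrite /yseq /= mul0r add0r mul0n modn1 mul1n ltz_nat.
rewrite yseq_step mulSn expnD -mulnA PoszM.
have -> : c j * x%:Z * P j = c j * (2 ^ (j * m) * x)%N%:Z by rewrite PoszM; ring.
exact: ltr_add_digit (ctrl_bounds j).
Qed.

End MontgomeryReduction.

Theorem lemma4p3 (m n N x xminv : nat) :
  (0 < m)%N -> (0 < n)%N -> (m %| n)%N ->
  (0 < N)%N -> (N < 2 ^ n)%N ->
  (0 < x)%N -> odd x -> (x < 2 ^ m)%N ->
  (xminv < 2 ^ m)%N -> (x * xminv = 1 %[mod 2 ^ m])%N ->
  forall j : nat, (j <= (n - m) %/ m)%N ->
    (yseq m N x xminv j = N%:Z %[mod (2 ^ (j * m))%N%:Z])%Z /\
    0 <= yseq m N x xminv j /\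
    yseq m N x xminv j < (2 ^ (j * m) * x)%N%:Z /\
    (x%:Z %| yseq m N x xminv j)%Z.
Proof.
(* The invariants hold for every [j]. *)
move=> _ _ _ _ _ x_gt0 _ _ _ x_xminv j _.
have /andP[y_ge0 y_lt] := yseq_bounds N x_xminv j x_gt0.
by split; [|split; [|split]]; rewrite ?yseq_modN ?dvdz_yseq.
Qed.
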